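(* Let $B$ be a commutative ring with identity and $A$ a subring of $B$ containing the identity. Suppose $A$ is a pm-ring, $A$ is a dense subring of $B$, and $A$ is a weak completely normal subring of $B$. Then the maximal spectrum $\operatorname{Max}(A)$ is homeomorphic to $\operatorname{Max}(B)$.
   Context: All rings are commutative with identity; subrings contain the identity. $\operatorname{spec} R$ is the set of prime ideals of $R$ with the Zariski topology, and $\operatorname{Max}(R)$ is the subspace of maximal ideals. A pm-ring is a ring in which every prime ideal is contained in a unique maximal ideal. A subring $A$ of $B$ is dense in $B$ if for every ideal $I$ of $B$ and every $b\in B\setminus \operatorname{rad}(I)$ there exists $a\in B\setminus\operatorname{rad}(I)$ with $ab\in A$. A subring $A$ of $B$ is a weak completely normal subring of $B$ if for any two distinct maximal ideals $M\neq M'$ of $B$ such that $M\cap A$ and $M'\cap A$ are non-comparable (under inclusion), $\operatorname{cl}_{\operatorname{spec} A}\{M\cap A\}\cap \operatorname{cl}_{\operatorname{spec} A}\{M'\cap A\}=\emptyset$. *)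

From mathcomp Require Import all_boot all_algebra.
Set Implicit Arguments. Unset Strict Implicit. Unset Printing Implicit Defensive.
Import GRing.Theory.
Local Open Scope ring_scope.

Definition subset_of (R : Type) (I J : R -> Prop) : Prop := forall x, I x -> J x.

Section Ideals.
Variable R : comNzRingType.

Definition is_ideal (I : R -> Prop) : Prop :=
  [/\ I 0, (forall x y, I x -> I y -> I (x - y)) & (forall r x, I x -> I (r * x))].

Definition is_prime (P : R -> Prop) : Prop :=
  [/\ is_ideal P, ~ P 1 & forall x y, P (x * y) -> P x \/ P y].

Definition is_maximal (M : R -> Prop) : Prop :=
  [/\ is_ideal M, ~ M 1 &
      forall J : R -> Prop, is_ideal J -> subset_of M J -> subset_of J M \/ J 1].

Definition rad (I : R -> Prop) : R -> Prop := fun x => exists n : nat, I (x ^+ n).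

Definition pm_ring : Prop :=
  forall P, is_prime P ->
    exists M, [/\ is_maximal M, subset_of P M &
      forall M', is_maximal M' -> subset_of P M' -> M' = M].

(* Zariski closure in spec R of a set X of primes: the intersection of all
   closed sets V(I) = {Q prime | I ⊆ Q} containing X. *)
Definition spec_closure (X : (R -> Prop) -> Prop) : (R -> Prop) -> Prop :=
  fun Q => is_prime Q /\
    forall I : R -> Prop, (forall P, X P -> subset_of I P) -> subset_of I Q.

Definition MaxSpec := {M : R -> Prop | is_maximal M}.

Definition max_closed (Z : MaxSpec -> Prop) : Prop :=
  exists I : R -> Prop, forall M : MaxSpec, Z M <-> subset_of I (proj1_sig M).

End Ideals.

Definition max_continuous (R S : comNzRingType) (g : MaxSpec R -> MaxSpec S) : Prop :=
  forall Z, max_closed Z -> max_closed (fun M => Z (g M)).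

Definition max_homeomorphic (R S : comNzRingType) : Prop :=
  exists (g : MaxSpec R -> MaxSpec S) (h : MaxSpec S -> MaxSpec R),
    [/\ cancel g h, cancel h g, max_continuous g & max_continuous h].

(* A is identified with its image under the injective ring morphism f. *)
Section Subring.
Variables (A B : comNzRingType) (f : {rmorphism A -> B}).

Definition contract (M : B -> Prop) : A -> Prop := fun a => M (f a).

Definition dense_subring : Prop :=
  forall I : B -> Prop, is_ideal I -> forall b, ~ rad I b ->
    exists a, ~ rad I a /\ exists x : A, f x = a * b.

Definition weak_completely_normal : Prop :=
  forall M M' : B -> Prop, is_maximal M -> is_maximal M' -> M <> M' ->
    ~ subset_of (contract M) (contract M') -> ~ subset_of (contract M') (contract M) ->
    ~ (exists Q, spec_closure (fun P => P = contract M) Q /\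
                 spec_closure (fun P => P = contract M') Q).
End Subring.

(* Send a maximal ideal M of B to the unique maximal ideal of the
   pm-ring A above the prime M ∩ A.  Every maximal ideal N of A is reached: a
   prime of B maximal with respect to avoiding f(A \ N) contracts into N, and so
   does any maximal ideal above it.  Density makes comparable contractions of
   maximal ideals equal, and two maximal ideals with incomparable contractions
   and the same image would give a common point of the closures of M ∩ A and
   M' ∩ A, which weak complete normality forbids; so the map is bijective.
   Continuity of the inverse is again the lifting argument.  Continuity of the
   map rests on a separation property of pm-rings: if J ⊄ N, then J + O_N = A,
   where O_N is the kernel of A -> A_N, and writing 1 = g + k with g in the
   ideal generated by J and s k = 0, s ∉ N, the element s lies in every prime
   below a maximal ideal containing J. *)

From Pilot Require Import Defs.
From mathcomp Require Import all_boot all_algebra.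
From mathcomp Require classical_sets.
From Stdlib Require Import Classical ClassicalEpsilon FunctionalExtensionality.
From Stdlib Require Import PropExtensionality ProofIrrelevance.
Set Implicit Arguments. Unset Strict Implicit. Unset Printing Implicit Defensive.
Import GRing.Theory.
Local Open Scope ring_scope.

Section Ideals.
Variable R : comNzRingType.
Implicit Types (I J K L S X P Q M N : R -> Prop) (x y r s : R).

Lemma ideal0 I : is_ideal I -> I 0.
Proof. by case. Qed.

Lemma idealB I x y : is_ideal I -> I x -> I y -> I (x - y).
Proof. by case=> _ + _; apply. Qed.

Lemma idealM I r x : is_ideal I -> I x -> I (r * x).
Proof. by case=> _ _; apply. Qed.

Lemma idealMr I r x : is_ideal I -> I x -> I (x * r).
Proof. by rewrite mulrC; apply: idealM. Qed.

Lemma idealN I x : is_ideal I -> I x -> I (- x).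
Proof. by move=> iI Ix; rewrite -sub0r; apply: idealB (ideal0 iI) Ix. Qed.

Lemma idealD I x y : is_ideal I -> I x -> I y -> I (x + y).
Proof. by move=> iI Ix Iy; rewrite -[y]opprK; apply: idealB (idealN iI Iy). Qed.

Lemma ideal_zero : is_ideal (fun x : R => x = 0).
Proof. by split=> // [x y -> ->|r x ->]; rewrite ?subr0 ?mulr0. Qed.

Definition ideal_hull X : R -> Prop :=
  fun x => forall K, is_ideal K -> subset_of X K -> K x.

Lemma ideal_hull_ideal X : is_ideal (ideal_hull X).
Proof.
split=> [K iK _|x y Hx Hy K iK XK|r x Hx K iK XK]; first exact: ideal0.
  by apply: idealB; [|apply: Hx|apply: Hy].
by apply: idealM; [|apply: Hx].
Qed.

Lemma ideal_hull_sub X : subset_of X (ideal_hull X).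
Proof. by move=> x Xx K _; apply. Qed.

Lemma ideal_hull_min X K : is_ideal K -> subset_of X K -> subset_of (ideal_hull X) K.
Proof. by move=> iK XK x; apply. Qed.

Definition ideal_sum I J : R -> Prop := fun x => exists i j, [/\ I i, J j & x = i + j].

Lemma ideal_sum_ideal I J : is_ideal I -> is_ideal J -> is_ideal (ideal_sum I J).
Proof.
move=> iI iJ; split.
- by exists 0, 0; rewrite addr0; split=> //; apply: ideal0.
- move=> _ _ [i [j [Ii Jj ->]]] [i' [j' [Ii' Jj' ->]]].
  by exists (i - i'), (j - j'); split; [apply: idealB|apply: idealB|rewrite opprD addrACA].
- move=> r _ [i [j [Ii Jj ->]]].
  by exists (r * i), (r * j); split; [apply: idealM|apply: idealM|rewrite mulrDr].
Qed.

Lemma ideal_suml I J : is_ideal J -> subset_of I (ideal_sum I J).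
Proof. by move=> iJ x Ix; exists x, 0; split; rewrite ?addr0 //; apply: ideal0. Qed.

Lemma ideal_sumr I J : is_ideal I -> subset_of J (ideal_sum I J).
Proof. by move=> iI x Jx; exists 0, x; split; rewrite ?add0r //; apply: ideal0. Qed.

Definition ideal_adjoin I z : R -> Prop := fun x => exists i a, I i /\ x = i + a * z.

Lemma ideal_adjoin_ideal I z : is_ideal I -> is_ideal (ideal_adjoin I z).
Proof.
move=> iI; split.
- by exists 0, 0; rewrite mul0r addr0; split=> //; apply: ideal0.
- move=> _ _ [i [a [Ii ->]]] [i' [a' [Ii' ->]]].
  by exists (i - i'), (a - a'); split; [apply: idealB|rewrite mulrBl opprD addrACA].
- move=> r _ [i [a [Ii ->]]].
  by exists (r * i), (r * a); split; [apply: idealM|rewrite mulrDr mulrA].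
Qed.

Lemma ideal_adjoin_sub I z : subset_of I (ideal_adjoin I z).
Proof. by move=> x Ix; exists x, 0; rewrite mul0r addr0. Qed.

Lemma ideal_adjoin_gen I z : is_ideal I -> ideal_adjoin I z z.
Proof. by move=> iI; exists 0, 1; rewrite mul1r add0r; split=> //; apply: ideal0. Qed.

Definition multiplicative S := S 1 /\ forall x y, S x -> S y -> S (x * y).

Definition avoiding_ideal L S X :=
  [/\ is_ideal X, subset_of L X & forall s, S s -> ~ X s].

Definition maximal_avoiding_ideal L S Q := avoiding_ideal L S Q /\
  forall K, avoiding_ideal L S K -> subset_of Q K -> subset_of K Q.

Lemma exists_maximal_avoiding_ideal L S : is_ideal L -> (forall s, S s -> ~ L s) ->
  exists Q, maximal_avoiding_ideal L S Q.
Proof.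
move=> iL LS.
(* Empty sets are admitted because [Zorn_bigcup] also covers the empty chain. *)
pose P X := (forall x, ~ X x) \/ avoiding_ideal L S X.
have [|Q [PQ maxQ]] := @classical_sets.Zorn_bigcup R P.
  move=> F FP Ftot.
  have inhabited_avoiding X x : F X -> X x -> avoiding_ideal L S X.
    by move=> /FP [/(_ x)|].
  have [[X0 FX0 [x0 X0x0]]|empty] := classic (exists2 X, F X & exists x, X x); last first.
    by left=> x [X FX Xx]; apply: empty; exists X => //; exists x.
  have [iX0 LX0 _] := inhabited_avoiding _ _ FX0 X0x0.
  right; split.
  - split; first by exists X0 => //; apply: ideal0.
    + move=> x y [X1 FX1 X1x] [X2 FX2 X2y].
      have [X12|X21] := Ftot X1 X2 FX1 FX2.
        exists X2 => //; have [iX2 _ _] := inhabited_avoiding _ _ FX2 X2y.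
        exact: idealB iX2 (X12 x X1x) X2y.
      exists X1 => //; have [iX1 _ _] := inhabited_avoiding _ _ FX1 X1x.
      exact: idealB iX1 X1x (X21 y X2y).
    + move=> r x [X FX Xx]; exists X => //.
      by have [iX _ _] := inhabited_avoiding _ _ FX Xx; apply: idealM.
  - by move=> x Lx; exists X0 => //; apply: LX0.
  - by move=> s Ss [X FX Xs]; case: (inhabited_avoiding _ _ FX Xs) => _ _ /(_ s Ss).
have aL : avoiding_ideal L S L by split.
have aQ : avoiding_ideal L S Q.
  case: PQ => // Qempty; exfalso; apply: (maxQ L) => //; last by right.
  by split=> [x /Qempty|/(_ 0 (ideal0 iL))/Qempty].
exists Q; split=> // K aK QK x Kx; apply: NNPP => Qx.
by apply: (maxQ K); [split=> // /(_ x Kx)|right].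
Qed.

Lemma maximal_avoiding_ideal_prime L S Q : multiplicative S ->
  maximal_avoiding_ideal L S Q -> is_prime Q.
Proof.
move=> [S1 SM] [[iQ LQ QS] maxQ]; split=> //; first exact: QS.
move=> x y Qxy; apply: NNPP => /not_or_and [Qx Qy].
have meets z : ~ Q z -> exists2 s, S s & ideal_adjoin Q z s.
  move=> Qz; apply: NNPP => noS; apply: Qz; apply: (maxQ (ideal_adjoin Q z)).
  - split; [exact: ideal_adjoin_ideal|by move=> u /LQ /ideal_adjoin_sub|].
    by move=> s Ss Js; apply: noS; exists s.
  - exact: ideal_adjoin_sub.
  - exact: ideal_adjoin_gen.
have [s Ss [q [a [Qq Es]]]] := meets x Qx.
have [t St [q' [b [Qq' Et]]]] := meets y Qy.
apply: (QS _ (SM _ _ Ss St)).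
rewrite Es Et mulrDl !mulrDr mulrACA.
by do 2?apply: idealD => //; [apply: idealMr|apply: idealMr|apply: idealM|apply: idealM].
Qed.

Lemma exists_prime_avoiding L S : is_ideal L -> multiplicative S ->
  (forall s, S s -> ~ L s) -> exists Q, [/\ is_prime Q, subset_of L Q & forall s, S s -> ~ Q s].
Proof.
move=> iL mS LS; have [Q maxQ] := exists_maximal_avoiding_ideal iL LS.
have [[_ LQ QS] _] := maxQ.
by exists Q; split=> //; apply: maximal_avoiding_ideal_prime maxQ.
Qed.

Lemma exists_maximal_over I : is_ideal I -> ~ I 1 ->
  exists M, is_maximal M /\ subset_of I M.
Proof.
move=> iI I1; have [|M [[iM IM M1] maxM]] :=
  @exists_maximal_avoiding_ideal I (fun x => x = 1) iI; first by move=> s ->.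
exists M; split=> //; split=> //; first exact: M1.
move=> J iJ MJ; have [J1|J1] := classic (J 1); [by right|left].
by apply: maxM => //; split=> // [x /IM /MJ|s ->].
Qed.

Lemma maximal_prime M : is_maximal M -> is_prime M.
Proof.
move=> [iM M1 maxM]; apply: (@maximal_avoiding_ideal_prime M (fun x => x = 1)).
  by split=> // x y -> ->; rewrite mulr1.
split=> [|K [iK _ K1] MK]; first by split=> // s ->.
by have [|/K1] := maxM K iK MK.
Qed.

Lemma maximal_ideal M : is_maximal M -> is_ideal M.
Proof. by case. Qed.

Lemma prime_ideal P : is_prime P -> is_ideal P.
Proof. by case. Qed.

Lemma prime_mul P x y : is_prime P -> P (x * y) -> P x \/ P y.
Proof. by case=> _ _; apply. Qed.

Lemma prime_rad P x : is_prime P -> Defs.rad P x -> P x.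
Proof.
move=> pP [n]; elim: n => [|n IH]; first by rewrite expr0; case: pP.
by rewrite exprS => /(prime_mul pP) [].
Qed.

Lemma maximal_eq M N : is_maximal M -> is_maximal N -> subset_of M N -> M = N.
Proof.
move=> [_ _ maxM] [iN N1 _] MN; have [NM|//] := maxM N iN MN.
by apply: functional_extensionality => x; apply: propositional_extensionality; split; auto.
Qed.

End Ideals.

Section PmRings.
Variable R : comNzRingType.
Implicit Types (J : R -> Prop) (P Q M N : R -> Prop).

(* The kernel O_P of the localization map R -> R_P. *)
Definition local_kernel P : R -> Prop := fun x => exists2 s, ~ P s & s * x = 0.

Lemma local_kernel_ideal P : is_prime P -> is_ideal (local_kernel P).
Proof.
move=> pP; split.
- by exists 1; [case: pP|rewrite mulr0].
- move=> x y [s Ps sx] [t Pt ty]; exists (s * t); first by case/(prime_mul pP).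
  by rewrite mulrBr mulrAC sx mul0r -mulrA ty mulr0 subrr.
- by move=> r x [s Ps sx]; exists s; rewrite // mulrCA sx mulr0.
Qed.

Hypothesis pm : pm_ring R.

Lemma pm_maximal_uniq P M N : is_prime P -> is_maximal M -> is_maximal N ->
  subset_of P M -> subset_of P N -> M = N.
Proof.
by move=> pP mM mN PM PN; have [M0 [_ _ uniq]] := pm pP; rewrite (uniq M mM PM) (uniq N mN PN).
Qed.

(* Distinct maximal ideals have no common prime below them, so the
   multiplicative set (R \ M)(R \ N) must meet the zero ideal. *)
Lemma pm_local_kernel_not_sub M N : is_maximal M -> is_maximal N -> M <> N ->
  ~ subset_of (local_kernel M) N.
Proof.
move=> mM mN MN kerMN; have [pM pN] := (maximal_prime mM, maximal_prime mN).
pose S z := exists s t, [/\ ~ M s, ~ N t & z = s * t].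
have mS : multiplicative S.
  split; first by exists 1, 1; rewrite mulr1; split=> //; [case: pM|case: pN].
  move=> _ _ [s [t [Ms Nt ->]]] [s' [t' [Ms' Nt' ->]]].
  exists (s * s'), (t * t'); split; [by case/(prime_mul pM)|by case/(prime_mul pN)|].
  exact: mulrACA.
have [|Q [pQ _ QS]] := exists_prime_avoiding (ideal_zero R) mS.
  by move=> _ [s [t [Ms Nt ->]]] st0; apply/Nt/kerMN; exists s.
apply: MN; apply: (pm_maximal_uniq pQ mM mN) => x Qx; apply: NNPP => Px; apply: (QS x) => //.
  by exists x, 1; rewrite mulr1; split=> //; case: pN.
by exists 1, x; rewrite mul1r; split=> //; case: pM.
Qed.

Lemma pm_separating_element J N : is_maximal N -> ~ subset_of J N ->
  exists2 s, ~ N s & forall Q M, is_prime Q -> is_maximal M -> subset_of Q M ->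
    subset_of J M -> Q s.
Proof.
move=> mN JN; have pN := maximal_prime mN.
pose G := ideal_hull J; have iG : is_ideal G := ideal_hull_ideal J.
have iK := local_kernel_ideal pN.
have [one_sum|] := classic (ideal_sum G (local_kernel N) 1); last first.
  move=> /(exists_maximal_over (ideal_sum_ideal iG iK)) [N' [mN' sumN']].
  have JN' : subset_of J N' by move=> x /ideal_hull_sub /(ideal_suml iK) /sumN'.
  have NN' : N <> N' by move=> E; apply: JN; rewrite E.
  by case: (pm_local_kernel_not_sub mN mN' NN') => x /(ideal_sumr iG) /sumN'.
have [g [k [Gg [s Ns sk] E1]]] := one_sum.
exists s => // Q M pQ mM QM JM.
have Mk : ~ M k.
  move=> Mk; have [_ M1 _] := mM; apply: M1; rewrite E1.
  by apply: idealD (maximal_ideal mM) _ Mk; apply: (ideal_hull_min (maximal_ideal mM) JM).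
have : Q (s * k) by rewrite sk; apply: ideal0 (prime_ideal pQ).
by case/(prime_mul pQ) => // /QM.
Qed.

End PmRings.

Lemma spec_closure1 (R : comNzRingType) (P Q : R -> Prop) :
  is_prime Q -> subset_of P Q -> spec_closure (fun X => X = P) Q.
Proof. by move=> pQ PQ; split=> // I /(_ P erefl) IP x /IP /PQ. Qed.

Lemma MaxSpec_eq (R : comNzRingType) (M N : MaxSpec R) : sval M = sval N -> M = N.
Proof. by case: M N => [M mM] [N mN] /= E; subst N; rewrite (proof_irrelevance _ mM mN). Qed.

Section Contraction.
Variables (A B : comNzRingType) (f : {rmorphism A -> B}).

Lemma contract_prime P : is_prime P -> is_prime (contract f P).
Proof.
move=> [[P0 PB PM] P1 Pmul]; rewrite /contract; split.
- by split=> [|x y|r x]; rewrite ?rmorph0 ?rmorphB ?rmorphM //; [apply: PB|apply: PM].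
- by rewrite rmorph1.
- by move=> x y; rewrite rmorphM => /Pmul.
Qed.

Lemma dense_contract_sub_eq M N : dense_subring f -> is_maximal M -> is_maximal N ->
  subset_of (contract f M) (contract f N) -> M = N.
Proof.
move=> dense mM mN MN; apply: maximal_eq => // b Mb; apply: NNPP => Nb.
have pN := maximal_prime mN.
have [|a [Na [x fx]]] := dense _ (maximal_ideal mN) b; first by move/(prime_rad pN).
have : contract f N x by apply: MN; rewrite /contract fx; apply: idealM (maximal_ideal mM) Mb.
rewrite /contract fx => /(prime_mul pN) [Nfa|//].
by apply: Na; exists 1%N; rewrite expr1.
Qed.

End Contraction.

Section MaxCorrespondence.
Variables (A B : comNzRingType) (f : {rmorphism A -> B}).
Hypothesis pm : pm_ring A.

Lemma contract_max_exists (M : MaxSpec B) :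
  exists N : MaxSpec A, subset_of (contract f (sval M)) (sval N).
Proof.
have [N [mN MN _]] := pm (contract_prime f (maximal_prime (svalP M))).
by exists (exist _ N mN).
Qed.

Definition contract_max (M : MaxSpec B) : MaxSpec A :=
  sval (constructive_indefinite_description _ (contract_max_exists M)).

Lemma contract_max_sub M : subset_of (contract f (sval M)) (sval (contract_max M)).
Proof. exact: svalP (constructive_indefinite_description _ (contract_max_exists M)). Qed.

Lemma contract_maxE M (Q : A -> Prop) (N : MaxSpec A) : is_prime Q ->
  subset_of Q (contract f (sval M)) -> subset_of Q (sval N) -> contract_max M = N.
Proof.
move=> pQ QM QN; apply: MaxSpec_eq; apply: (pm_maximal_uniq pm pQ) => //; try exact: svalP.
by move=> x /QM /contract_max_sub.
Qed.

(* A prime of B avoiding f(A \ N) contracts into N; any maximal ideal above it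
   then lies over N by the pm property. *)
Lemma contract_max_lift (N : MaxSpec A) (L : B -> Prop) : is_ideal L ->
  (forall a, ~ sval N a -> ~ L (f a)) ->
  exists M : MaxSpec B, contract_max M = N /\ subset_of L (sval M).
Proof.
move=> iL NL; have pN := maximal_prime (svalP N).
pose S y := exists2 a, ~ sval N a & y = f a.
have mS : multiplicative S.
  split; first by exists 1; [case: pN|rewrite rmorph1].
  move=> _ _ [a Na ->] [b Nb ->]; exists (a * b); last by rewrite rmorphM.
  by case/(prime_mul pN).
have [|Q [pQ LQ QS]] := exists_prime_avoiding iL mS; first by move=> _ [a Na ->]; apply: NL.
have [|M [mM QM]] := exists_maximal_over (prime_ideal pQ); first by case: pQ.
exists (exist _ M mM); split; last by move=> x /LQ /QM.
apply: (contract_maxE (contract_prime f pQ)) => [x /QM //|x Qx].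
by apply: NNPP => Nx; apply: (QS (f x)) => //; exists x.
Qed.

Hypotheses (finj : injective f) (dense : dense_subring f) (wcn : weak_completely_normal f).

Lemma contract_max_surj N : exists M, contract_max M = N.
Proof.
have [|M [MN _]] := @contract_max_lift N _ (ideal_zero B); last by exists M.
move=> a Na fa0; apply: Na; suff -> : a = 0 by apply: ideal0 (maximal_ideal (svalP N)).
by apply: finj; rewrite fa0 rmorph0.
Qed.

Lemma contract_max_inj : injective contract_max.
Proof.
move=> M1 M2 E12; apply: MaxSpec_eq.
have [m1 m2] := (svalP M1, svalP M2).
have [c12|n12] := classic (subset_of (contract f (sval M1)) (contract f (sval M2))).
  exact: dense_contract_sub_eq dense m1 m2 c12.
have [c21|n21] := classic (subset_of (contract f (sval M2)) (contract f (sval M1))).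
  exact/esym/(dense_contract_sub_eq dense m2 m1 c21).
have [//|ne] := classic (sval M1 = sval M2); case: (wcn m1 m2 ne n12 n21).
have pN := maximal_prime (svalP (contract_max M1)).
exists (sval (contract_max M1)); split; apply: spec_closure1 => //; first exact: contract_max_sub.
by rewrite E12; apply: contract_max_sub.
Qed.

Definition extend_max (N : MaxSpec A) : MaxSpec B :=
  sval (constructive_indefinite_description _ (contract_max_surj N)).

Lemma extend_maxK : cancel extend_max contract_max.
Proof. by move=> N; apply: svalP (constructive_indefinite_description _ (contract_max_surj N)). Qed.

Lemma contract_maxK : cancel contract_max extend_max.
Proof. by move=> M; apply: contract_max_inj; rewrite extend_maxK. Qed.

Lemma extend_max_continuous : max_continuous extend_max.
Proof.
move=> Z [I ZI].
exists (fun a => forall M : MaxSpec B, subset_of I (sval M) -> sval M (f a)) => N.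
rewrite ZI; split=> [IM a Ia|IN].
  by rewrite -(extend_maxK N); apply/contract_max_sub/Ia.
have iG := ideal_hull_ideal I.
have [|M [MN GM]] := @contract_max_lift N _ iG.
  move=> a Na Ga; apply/Na/IN => M IM.
  exact: ideal_hull_min (maximal_ideal (svalP M)) IM _ Ga.
by rewrite -MN contract_maxK => x /ideal_hull_sub /GM.
Qed.

Lemma contract_max_continuous : max_continuous contract_max.
Proof.
move=> Z [J ZJ].
exists (fun b => forall M : MaxSpec B, subset_of J (sval (contract_max M)) -> sval M b) => M0.
rewrite ZJ; split=> [JM0 b /(_ M0 JM0) //|IM0]; apply: NNPP => JN0.
have [s Ns sep] := pm_separating_element pm (svalP (contract_max M0)) JN0.
apply/Ns/contract_max_sub/IM0 => M JM.
apply: (sep (contract f (sval M)) (sval (contract_max M))) => //.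
- exact/contract_prime/maximal_prime/svalP.
- exact: svalP.
- exact: contract_max_sub.
Qed.

End MaxCorrespondence.

Theorem theorem4p8 (A B : comNzRingType) (f : {rmorphism A -> B}) :
  injective f -> pm_ring A -> dense_subring f -> weak_completely_normal f ->
  max_homeomorphic A B.
Proof.
move=> finj pm dense wcn.
exists (extend_max pm finj), (contract_max f pm); split.
- exact: extend_maxK.
- exact: contract_maxK.
- exact: extend_max_continuous.
- exact: contract_max_continuous.
Qed.
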